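(* Let $\Lambda\subset I_N$ and let $k$ be a time level. For every $\phi\in V^k(\Lambda)^d$ and $\psi\in V^k(\Lambda)$, $$(\psi,\nabla_h\cdot\phi)_\Lambda=-(\nabla_h\psi,\phi)_\Lambda,\qquad -(\psi,\Delta_h\psi)_\Lambda=|\psi|_{1,k,\Lambda}^2,$$ where for $i\in\Lambda$: $(\nabla_h\cdot\phi)_i=\sum_{j\in\Lambda}V_j(\phi_j+\phi_i)\cdot\nabla w_h(|x^k_i-x^k_j|)$, $(\nabla_h\psi)_i=\sum_{j\in\Lambda}V_j(\psi_j-\psi_i)\nabla w_h(|x^k_i-x^k_j|)$, and $(\Delta_h\psi)_i=2\sum_{j\in\Lambda\setminus\{i\}}V_j\frac{\psi_i-\psi_j}{|x^k_i-x^k_j|}\frac{x^k_i-x^k_j}{|x^k_i-x^k_j|}\cdot\nabla w_h(|x^k_i-x^k_j|)$.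
   Context: Let $d\in\{2,3\}$. Reference weight function $w\in C^2([0,\infty))$ with some $r_0>0$: $w>0$ on $(0,r_0)$, $w=0$ on $[r_0,\infty)$, $\dot w<0$ on $(0,r_0)$, $\dot w(0)=0$, $\dot w=0$ on $[r_0,\infty)$, $\int_{\mathbb{R}^d}w(|x|)dx=1$. For $h>0$, $w_h(r)=h^{-d}w(r/h)$ with derivative $\dot w_h$; for $x\ne y$, $\nabla w_h(|x-y|)=\dot w_h(|x-y|)\frac{x-y}{|x-y|}$, and $\nabla w_h(0):=0$. $N\in\mathbb{N}$, $I_N=\{1,\dots,N\}$, particle volumes $V_1,\dots,V_N>0$, pairwise distinct particle positions $x^k_1,\dots,x^k_N\in\mathbb{R}^d$ at level $k$. $V^k(\Lambda)$ is the space of real functions on $\{x^k_i\}_{i\in\Lambda}$ (values $\phi_i$), $V^k(\Lambda)^m$ the $\mathbb{R}^m$-valued ones. Discrete inner product $(\phi,\varphi)_\Lambda=\sum_{i\in\Lambda}V_i\,\phi_i\cdot\varphi_i$; discrete semi-norm $|\psi|_{1,k,\Lambda}=\big(\sum_{i\in\Lambda}V_i\sum_{j\in\Lambda\setminus\{i\}}V_j\frac{|\psi_i-\psi_j|^2}{|x^k_i-x^k_j|}|\dot w_h(|x^k_i-x^k_j|)|\big)^{1/2}$. *)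

From HB Require Import structures.
From mathcomp Require Import all_boot all_order all_algebra.
From mathcomp Require Import all_classical all_reals all_analysis.
Set Implicit Arguments. Unset Strict Implicit. Unset Printing Implicit Defensive.
Import Order.TTheory GRing.Theory Num.Theory numFieldNormedType.Exports.
Local Open Scope classical_set_scope.
Local Open Scope ring_scope.

Section SPH.
Variable R : realType.

Definition vdot (d : nat) (u v : 'rV[R]_d) : R := \sum_(l < d) u 0 l * v 0 l.
Definition vnorm (d : nat) (u : 'rV[R]_d) : R := Num.sqrt (vdot u u).

Definition radial_integral (d : nat) (w : R -> R) : \bar R :=
  match d with
  | 2 => (\int[@lebesgue_measure R]_x1 \int[@lebesgue_measure R]_x2
            (w (Num.sqrt (x1 ^+ 2 + x2 ^+ 2)))%:E)%E
  | 3 => (\int[@lebesgue_measure R]_x1 \int[@lebesgue_measure R]_x2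
            \int[@lebesgue_measure R]_x3
            (w (Num.sqrt (x1 ^+ 2 + x2 ^+ 2 + x3 ^+ 2)))%:E)%E
  | _ => 0%E
  end.

Definition reference_weight (d : nat) (w : R -> R) (r0 : R) : Prop :=
  [/\ 0 < r0,
      [/\ 
      (forall r, 0 <= r -> derivable w r 1 /\ derivable (derive1 w) r 1),
      
      {within [set r : R | 0 <= r], continuous (derive1n 2 w : R -> R)} &
       derive1 w 0 = 0],
      (forall r, 0 < r < r0 -> 0 < w r) /\ (forall r, r0 <= r -> w r = 0),
      (forall r, 0 < r < r0 -> derive1 w r < 0) /\
      (forall r, r0 <= r -> derive1 w r = 0) &
      radial_integral d w = 1%E].

Definition w_h (d : nat) (w : R -> R) (h : R) (r : R) : R := h ^- d * w (r / h).
Definition dw_h (d : nat) (w : R -> R) (h : R) : R -> R := derive1 (w_h d w h).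

(* \nabla w_h(|x - y|), with \nabla w_h(0) := 0 *)
Definition grad_wh (d : nat) (w : R -> R) (h : R) (x y : 'rV[R]_d) : 'rV[R]_d :=
  if x == y then 0
  else dw_h d w h (vnorm (x - y)) *: ((vnorm (x - y))^-1 *: (x - y)).

Variables (N d : nat) (w : R -> R) (h : R) (V : 'I_N -> R)
  (x : 'I_N -> 'rV[R]_d) (Lam : {set 'I_N}).

Definition ip_s (f g : 'I_N -> R) : R := \sum_(i in Lam) V i * (f i * g i).
Definition ip_v (f g : 'I_N -> 'rV[R]_d) : R := \sum_(i in Lam) V i * vdot (f i) (g i).

Definition div_h (phi : 'I_N -> 'rV[R]_d) (i : 'I_N) : R :=
  \sum_(j in Lam) V j * vdot (phi j + phi i) (grad_wh w h (x i) (x j)).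

Definition grad_h (psi : 'I_N -> R) (i : 'I_N) : 'rV[R]_d :=
  \sum_(j in Lam) (V j * (psi j - psi i)) *: grad_wh w h (x i) (x j).

Definition lap_h (psi : 'I_N -> R) (i : 'I_N) : R :=
  2 * \sum_(j in Lam | j != i)
        V j * ((psi i - psi j) / vnorm (x i - x j)) *
        vdot ((vnorm (x i - x j))^-1 *: (x i - x j)) (grad_wh w h (x i) (x j)).

Definition seminorm1 (psi : 'I_N -> R) : R :=
  Num.sqrt (\sum_(i in Lam) V i * \sum_(j in Lam | j != i)
     V j * ((psi i - psi j) ^+ 2 / vnorm (x i - x j)) *
     `|dw_h d w h (vnorm (x i - x j))|).

End SPH.

(* Both identities are discrete summation by parts.  The kernel
   [grad_wh (x i) (x j)] is antisymmetric in (i, j), while the Laplacian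
   weight [V i * V j * dw_h r_ij / r_ij] is symmetric, and a double sum over
   [Lam × Lam] of an antisymmetric summand vanishes.  Since w decreases,
   [dw_h <= 0], which turns [- dw_h] into the [|dw_h|] of the semi-norm. *)

From HB Require Import structures.
From mathcomp Require Import all_boot all_order all_algebra.
From mathcomp Require Import all_classical all_reals all_analysis.
From mathcomp Require Import ring.
Set Implicit Arguments. Unset Strict Implicit. Unset Printing Implicit Defensive.
Import Order.TTheory GRing.Theory Num.Theory numFieldNormedType.Exports.
Local Open Scope ring_scope.

Section AntisymmetricSums.
Variables (R : numDomainType) (I : finType) (A : {pred I}).

Lemma sum_antisym_eq0 (F : I -> I -> R) :
  (forall i j, F j i = - F i j) -> \sum_(i in A) \sum_(j in A) F i j = 0.
Proof.
move=> FN; set S := (X in X = 0).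
have SN : S = - S.
  rewrite {1}/S exchange_big /= -sumrN; apply: eq_bigr => i _.
  by rewrite -sumrN; apply: eq_bigr => j _; apply: FN.
have : S *+ 2 == 0 by rewrite mulr2n {1}SN addNr.
by rewrite mulrn_eq0 /= => /eqP.
Qed.

Lemma sum_sqr_diff_sym (K : I -> I -> R) (f : I -> R) :
  (forall i j, K j i = K i j) ->
  \sum_(i in A) \sum_(j in A) K i j * (f i - f j) ^+ 2
    = 2 * \sum_(i in A) f i * \sum_(j in A) K i j * (f i - f j).
Proof.
move=> Ksym; pose F i j := K i j * (f j ^+ 2 - f i ^+ 2).
have FN i j : F j i = - F i j by rewrite /F Ksym; ring.
apply/eqP; rewrite -subr_eq0 mulr_sumr -sumrB; apply/eqP.
rewrite -[in RHS](sum_antisym_eq0 FN).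
apply: eq_bigr => i _; rewrite !mulr_sumr -sumrB.
by apply: eq_bigr => j _; rewrite /F; ring.
Qed.

End AntisymmetricSums.

Section EuclideanRow.
Variables (R : realType) (d : nat).
Implicit Types u v z : 'rV[R]_d.

Lemma vdotC u v : vdot u v = vdot v u.
Proof. by apply: eq_bigr => l _; rewrite mulrC. Qed.

Lemma vdotDl u v z : vdot (u + v) z = vdot u z + vdot v z.
Proof. by rewrite /vdot -big_split; apply: eq_bigr => l _; rewrite mxE mulrDl. Qed.

Lemma vdotZl a u v : vdot (a *: u) v = a * vdot u v.
Proof. by rewrite /vdot mulr_sumr; apply: eq_bigr => l _; rewrite mxE mulrA. Qed.

Lemma vdotZr a u v : vdot u (a *: v) = a * vdot u v.
Proof. by rewrite vdotC vdotZl vdotC. Qed.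

Lemma vdotNl u v : vdot (- u) v = - vdot u v.
Proof. by rewrite -scaleN1r vdotZl mulN1r. Qed.

Lemma vdotNr u v : vdot u (- v) = - vdot u v.
Proof. by rewrite vdotC vdotNl vdotC. Qed.

Lemma vdot_suml (I : finType) (A : {pred I}) (f : I -> 'rV[R]_d) v :
  vdot (\sum_(j in A) f j) v = \sum_(j in A) vdot (f j) v.
Proof.
rewrite /vdot; under eq_bigr do rewrite summxE big_distrl.
by rewrite exchange_big.
Qed.

Lemma vdot_ge0 u : 0 <= vdot u u.
Proof. by apply: sumr_ge0 => l _; rewrite -expr2 sqr_ge0. Qed.

Lemma vdot_eq0 u : (vdot u u == 0) = (u == 0).
Proof.
apply/idP/eqP => [/eqP u0|->]; last first.
  by rewrite /vdot big1 // => l _; rewrite mxE mul0r.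
apply/rowP => l; rewrite mxE; apply/eqP; rewrite -sqrf_eq0 expr2.
by apply/eqP/(psumr_eq0P _ u0) => // m _; rewrite -expr2 sqr_ge0.
Qed.

Lemma vnorm0 : vnorm (0 : 'rV[R]_d) = 0.
Proof. by rewrite /vnorm /vdot big1 ?sqrtr0 // => l _; rewrite mxE mul0r. Qed.

Lemma vnorm_sqr u : vnorm u ^+ 2 = vdot u u.
Proof. by rewrite sqr_sqrtr // vdot_ge0. Qed.

Lemma vnorm_ge0 u : 0 <= vnorm u.
Proof. exact: sqrtr_ge0. Qed.

Lemma vnorm_eq0 u : (vnorm u == 0) = (u == 0).
Proof. by rewrite sqrtr_eq0 le_eqVlt ltNge vdot_ge0 orbF vdot_eq0. Qed.

Lemma vnormN u : vnorm (- u) = vnorm u.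
Proof. by rewrite /vnorm vdotNl vdotNr opprK. Qed.

End EuclideanRow.

Section ReferenceWeight.
Variables (R : realType) (d : nat) (w : R -> R) (r0 : R).
Hypothesis w_ref : reference_weight d w r0.

Lemma reference_weight_derivable s : 0 <= s -> derivable w s 1.
Proof. by case: w_ref => _ [der _ _] _ _ _ /der[]. Qed.

Lemma reference_weight_derive_le0 s : 0 <= s -> derive1 w s <= 0.
Proof.
case: w_ref => _ [_ _ dw0] _ [dw_lt0 dw_eq0] _.
rewrite le_eqVlt => /predU1P[<-|s_gt0]; first by rewrite dw0.
by case: (ltP s r0) => [?|/dw_eq0->//]; apply/ltW/dw_lt0; rewrite s_gt0.
Qed.

Lemma dw_hE (h r : R) : derivable w (r / h) 1 ->
  dw_h d w h r = h ^- d * (derive1 w (r / h) * h^-1).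
Proof.
move=> dw; have dscale : derivable (fun r : R => r * h^-1) r 1.
  by apply/derivable1_diffP; apply: differentiableM.
rewrite /dw_h (_ : w_h d w h = fun r => h ^- d * (w \o (fun r => r * h^-1)) r) //.
rewrite derive1Ml; last first.
  by apply/derivable1_diffP/differentiable_comp; apply/derivable1_diffP.
by rewrite derive1_comp // derive1Mr ?derive1_id ?mul1r //; apply: derivable_id.
Qed.

Lemma dw_h_le0 (h r : R) : 0 < h -> 0 <= r -> dw_h d w h r <= 0.
Proof.
move=> h_gt0 r_ge0; have rh_ge0 : 0 <= r / h by rewrite divr_ge0 // ltW.
rewrite dw_hE; last exact: reference_weight_derivable.
apply: mulr_ge0_le0; first by rewrite invr_ge0 exprn_ge0 // ltW.
by apply: mulr_le0_ge0; rewrite ?reference_weight_derive_le0 // invr_ge0 ltW.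
Qed.

End ReferenceWeight.

Section SummationByParts.
Variables (R : realType) (d : nat) (w : R -> R) (h : R) (N : nat)
  (V : 'I_N -> R) (x : 'I_N -> 'rV[R]_d) (Lam : {set 'I_N}).

Lemma grad_wh_sym (y z : 'rV[R]_d) : grad_wh w h z y = - grad_wh w h y z.
Proof.
rewrite /grad_wh eq_sym; case: eqP => _; first by rewrite oppr0.
by rewrite -(opprB y z) vnormN !scalerN.
Qed.

Lemma ip_s_div_h (phi : 'I_N -> 'rV[R]_d) (psi : 'I_N -> R) :
  ip_s V Lam psi (div_h w h V x Lam phi)
    = - ip_v V Lam (grad_h w h V x Lam psi) phi.
Proof.
apply/eqP; rewrite -addr_eq0 /ip_s /ip_v -big_split /=; apply/eqP.
pose G i j := grad_wh w h (x i) (x j).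
rewrite -[in RHS](@sum_antisym_eq0 _ _ [in Lam] (fun i j => V i * V j *
   (psi i * vdot (phi j) (G i j) + psi j * vdot (phi i) (G i j)))); last first.
  by move=> i j; rewrite /G grad_wh_sym !vdotNr; ring.
apply: eq_bigr => i _; rewrite /div_h /grad_h vdot_suml !mulr_sumr -big_split /=.
by apply: eq_bigr => j _; rewrite vdotDl vdotZl [vdot (G i j) _]vdotC /G; ring.
Qed.

Let dist i j := vnorm (x i - x j).
Let lap_weight i j := dw_h d w h (dist i j) / dist i j.

Lemma lap_weight_sym i j : lap_weight j i = lap_weight i j.
Proof. by rewrite /lap_weight /dist -(opprB (x i)) vnormN. Qed.

(* Coincident particles, [x i = x j] with [i != j], contribute nothing to
   either side: [grad_wh] vanishes there and so does [lap_weight i j = _ / 0]. *)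
Lemma lap_hE (psi : 'I_N -> R) i :
  lap_h w h V x Lam psi i
    = 2 * \sum_(j in Lam) V j * lap_weight i j * (psi i - psi j).
Proof.
congr (_ * _); rewrite big_mkcondr /=; apply: eq_bigr => j _.
case: ifPn => [_|/negbNE/eqP->]; last by rewrite subrr !mulr0.
rewrite /grad_wh /lap_weight /dist; case: eqP => [->|/eqP xij].
  by rewrite subrr vnorm0 invr0 !(mulr0, mul0r).
have r_neq0 : vnorm (x i - x j) != 0 by rewrite vnorm_eq0 subr_eq0.
by rewrite vdotZr vdotZl vdotZr -vnorm_sqr; field.
Qed.

Variable r0 : R.
Hypotheses (w_ref : reference_weight d w r0) (h_gt0 : 0 < h)
  (V_ge0 : forall i, 0 <= V i).

Lemma seminorm1_sqrE (psi : 'I_N -> R) :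
  seminorm1 w h V x Lam psi ^+ 2
    = - \sum_(i in Lam) \sum_(j in Lam)
          V i * V j * lap_weight i j * (psi i - psi j) ^+ 2.
Proof.
rewrite sqr_sqrtr; last first.
  apply: sumr_ge0 => i _; rewrite mulr_ge0 ?V_ge0 //; apply: sumr_ge0 => j _.
  by rewrite mulr_ge0 // mulr_ge0 ?V_ge0 // divr_ge0 ?sqr_ge0 ?vnorm_ge0.
rewrite -sumrN; apply: eq_bigr => i _; rewrite mulr_sumr -sumrN.
rewrite big_mkcondr /=; apply: eq_bigr => j _.
case: ifPn => [_|/negbNE/eqP->]; last by rewrite subrr expr0n !mulr0 oppr0.
rewrite ler0_norm /lap_weight /dist; first ring.
exact (dw_h_le0 w_ref h_gt0 (vnorm_ge0 _)).
Qed.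

Lemma ip_s_lap_h (psi : 'I_N -> R) :
  - ip_s V Lam psi (lap_h w h V x Lam psi) = seminorm1 w h V x Lam psi ^+ 2.
Proof.
rewrite seminorm1_sqrE sum_sqr_diff_sym.
  congr (- _); rewrite /ip_s mulr_sumr; apply: eq_bigr => i _.
  have pull_Vi : \sum_(j in Lam) V i * V j * lap_weight i j * (psi i - psi j)
      = V i * \sum_(j in Lam) V j * lap_weight i j * (psi i - psi j).
    by rewrite mulr_sumr; apply: eq_bigr => j _; rewrite !mulrA.
  by rewrite lap_hE pull_Vi; ring.
by move=> i j; rewrite lap_weight_sym [V j * V i]mulrC.
Qed.

End SummationByParts.

Theorem lemma3 (R : realType) (d : nat) (w : R -> R) (r0 h : R) (N : nat)
  (V : 'I_N -> R) (X : nat -> 'I_N -> 'rV[R]_d) (k : nat) (Lam : {set 'I_N})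
  (phi : 'I_N -> 'rV[R]_d) (psi : 'I_N -> R) :
  (d = 2 \/ d = 3)%N ->
  reference_weight d w r0 ->
  0 < h ->
  (forall i, 0 < V i) ->
  injective (X k) ->
  ip_s V Lam psi (div_h w h V (X k) Lam phi)
    = - ip_v V Lam (grad_h w h V (X k) Lam psi) phi
  /\ - ip_s V Lam psi (lap_h w h V (X k) Lam psi)
    = (seminorm1 w h V (X k) Lam psi) ^+ 2.
Proof.
move=> _ w_ref h_gt0 V_gt0 _; split; first exact: ip_s_div_h.
exact (ip_s_lap_h _ _ w_ref h_gt0 (fun i => ltW (V_gt0 i)) psi).
Qed.
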